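(* Let $\Phi\triangleright\Gamma\vdash^{(b,e,m,f)}t:\sigma$ be a tight derivation in system $\mathscr{E}$. Then there exist $u\in\mathcal{M}$ and a head-reduction sequence $\rho: t\to_h^{(b,e,m)}u$ (containing exactly $b$ steps of kind (b), $e$ steps of kind (e) and $m$ steps of kind (m)) such that $|u|=f$.
   Context: Pair pattern calculus: patterns $p,q ::= x\mid\langle p,q\rangle$ (linear); $\mathrm{var}(p)$ = variables of $p$; $p\# q$ means disjoint variables. Terms $t,u ::= x\mid\lambda p.t\mid\langle t,u\rangle\mid t\,u\mid t[p/u]$, $\mathrm{var}(p)$ bound in $t$ in $\lambda p.t$ and $t[p/u]$; $\mathrm{fv}$ as usual; terms modulo $\alpha$. List contexts $L::=\Box\mid L[p/u]$, $L\langle t\rangle$ plugging (possibly capturing), $\mathrm{bv}(L)$ variables bound by $L$; $t\{x/u\}$ capture-avoiding substitution; $\mathrm{abs}(t)$ iff $t=L\langle\lambda p.u\rangle$. Head reduction ($t\not\to_h$: no $u$ with $t\to_h u$): (b) $L\langle\lambda p.t\rangle u\to_h L\langle t[p/u]\rangle$ if $\mathrm{bv}(L)\cap\mathrm{fv}(u)=\emptyset$; (m) $t[\langle p_1,p_2\rangle/L\langle\langle u_1,u_2\rangle\rangle]\to_h L\langle t[p_1/u_1][p_2/u_2]\rangle$ if $t\not\to_h$ and $\mathrm{bv}(L)\cap\mathrm{fv}(t)=\emptyset$; (e) $t[x/u]\to_h t\{x/u\}$ if $t\not\to_h$; closure: $\lambda p.t\to_h\lambda p.t'$ if $t\to_h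 t'$; $tu\to_h t'u$ if $t\to_h t'$ and not $\mathrm{abs}(t)$; $t[p/u]\to_h t'[p/u]$ if $t\to_h t'$; $t[p/u]\to_h t[p/u']$ if $t\not\to_h$, $p$ not a variable, $u\to_h u'$. The kind of a step is the base rule (b), (e) or (m) it uses. Canonical forms $\mathcal{M} ::= \lambda p.\mathcal{M}\mid\langle t,t\rangle\mid\mathcal{M}[\langle p_1,p_2\rangle/\mathcal{N}]\mid\mathcal{N}$, $\mathcal{N} ::= x\mid\mathcal{N}\,t\mid\mathcal{N}[\langle p_1,p_2\rangle/\mathcal{N}]$, with size $|x|=0$, $|\langle t,u\rangle|=1$, $|\mathcal{N}t|=|\mathcal{N}|+1$, $|\lambda p.\mathcal{M}|=|\mathcal{M}|+1$, $|\mathcal{M}[\langle p_1,p_2\rangle/\mathcal{N}]|=|\mathcal{M}|+|\mathcal{N}|+1$. System $\mathscr{E}$. Types: tight types $\mathtt{t} ::= \bullet_{\mathcal{N}}\mid\bullet_{\mathcal{M}}$; types $\sigma ::= \mathtt{t}\mid \mathcal{A}_1\times\mathcal{A}_2\mid \mathcal{A}\to\sigma$; multi-types $\mathcal{A} ::= [\sigma_k]_{k\in K}$ (finite, possibly empty). Contexts map variables to multi-types, $\mathrm{dom}(\Gamma)$ = variables with non-empty multi-type; $\wedge$ pointwise multiset union; $\Gamma|_p$ restriction to $\mathrm{var}(p)$; $\Gamma\setminus\mathrm{var}(p)$ removal. $\mathrm{tight}(\sigma)$ iff $\sigma\in\{\bullet_{\mathcal{N}},\bullet_{\mathcal{M}}\}$,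 extended elementwise. Rules: (pat_v) $x:\mathcal{A}\Vdash^{(1,0,0)} x:\mathcal{A}$. (pat_×) from $\Gamma\Vdash^{(e_p,m_p,f_p)}p:\mathcal{A}$, $\Delta\Vdash^{(e_q,m_q,f_q)}q:\mathcal{B}$, $p\#q$ infer $\Gamma\wedge\Delta\Vdash^{(e_p+e_q,1+m_p+m_q,f_p+f_q)}\langle p,q\rangle:[\mathcal{A}\times\mathcal{B}]$. (pat_p) if $\mathrm{dom}(\Gamma)\subseteq\mathrm{var}(\langle p,q\rangle)$ and $\mathrm{tight}(\Gamma)$ then $\Gamma\Vdash^{(0,0,1)}\langle p,q\rangle:[\bullet_{\mathcal{N}}]$. (ax) $x:[\sigma]\vdash^{(0,0,0,0)}x:\sigma$. (abs) from $\Gamma\vdash^{(b,e,m,f)}t:\sigma$ and $\Gamma|_p\Vdash^{(e_p,m_p,f_p)}p:\mathcal{A}$ infer $\Gamma\setminus\mathrm{var}(p)\vdash^{(b+1,e+e_p,m+m_p,f+f_p)}\lambda p.t:\mathcal{A}\to\sigma$. (abs_p) from $\Gamma\vdash^{(b,e,m,f)}t:\mathtt{t}$ ($\mathtt{t}$ tight) and $\mathrm{tight}(\Gamma|_p)$ infer $\Gamma\setminus\mathrm{var}(p)\vdash^{(b,e,m,f+1)}\lambda p.t:\bullet_{\mathcal{M}}$. (many) from $(\Gamma_k\vdash^{(b_k,e_k,m_k,f_k)}t:\sigma_k)_{k\in K}$ infer $\wedge_k\Gamma_k\vdash^{(\sum b_k,\sum e_k,\sum m_k,\sum f_k)}t:[\sigma_k]_{k\in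 K}$. (app) from $\Gamma\vdash^{(b_t,e_t,m_t,f_t)}t:\mathcal{A}\to\sigma$, $\Delta\vdash^{(b_u,e_u,m_u,f_u)}u:\mathcal{A}$ infer $\Gamma\wedge\Delta\vdash^{(b_t+b_u,e_t+e_u,m_t+m_u,f_t+f_u)}t\,u:\sigma$. (app_p) from $\Gamma\vdash^{(b,e,m,f)}t:\bullet_{\mathcal{N}}$ infer $\Gamma\vdash^{(b,e,m,f+1)}t\,u:\bullet_{\mathcal{N}}$. (pair) from $\Gamma\vdash^{(b_t,e_t,m_t,f_t)}t:\mathcal{A}$, $\Delta\vdash^{(b_u,e_u,m_u,f_u)}u:\mathcal{B}$ infer $\Gamma\wedge\Delta\vdash^{(b_t+b_u,e_t+e_u,m_t+m_u,f_t+f_u)}\langle t,u\rangle:\mathcal{A}\times\mathcal{B}$. (pair_p) $\vdash^{(0,0,0,1)}\langle t,u\rangle:\bullet_{\mathcal{M}}$. (match) from $\Gamma\vdash^{(b_t,e_t,m_t,f_t)}t:\sigma$, $\Gamma|_p\Vdash^{(e_p,m_p,f_p)}p:\mathcal{A}$, $\Delta\vdash^{(b_u,e_u,m_u,f_u)}u:\mathcal{A}$ infer $(\Gamma\setminus\mathrm{var}(p))\wedge\Delta\vdash^{(b_t+b_u,e_t+e_u+e_p,m_t+m_u+m_p,f_t+f_u+f_p)}t[p/u]:\sigma$. A derivation is tight if its context and its type are tight. *)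

(* Pair pattern calculus, head reduction, and system E.
   Terms are represented with (multi-binder) de Bruijn indices, so that
   terms are taken modulo alpha-conversion by construction. *)
From Stdlib Require Import List PeanoNat Arith.
Import ListNotations.

(* A pattern is a binary tree whose leaves are the (anonymous) bound
   variables; linearity and disjointness p # q are automatic.
   Leaves are numbered left to right: in <p,q> the leaves of p are
   0 .. nv p - 1 and those of q are nv p .. nv p + nv q - 1. *)
Inductive pat : Type :=
| PV : pat
| PP : pat -> pat -> pat.

Fixpoint nv (p : pat) : nat :=
  match p with PV => 1 | PP p q => nv p + nv q end.

(* A binder with pattern p binds nv p indices:
   inside the body, index i < nv p is leaf i of p, and index i >= nv p
   refers to i - nv p outside the binder.
   Lam p t  = \p.t            (t under p)
   ES t p u = t[p/u]          (t under p, u not) *)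
Inductive term : Type :=
| Var : nat -> term
| Lam : pat -> term -> term
| Pair : term -> term -> term
| App : term -> term -> term
| ES : term -> pat -> term -> term.

Fixpoint lift (c d : nat) (t : term) : term :=
  match t with
  | Var n => Var (if n <? c then n else n + d)
  | Lam p t0 => Lam p (lift (c + nv p) d t0)
  | Pair t1 t2 => Pair (lift c d t1) (lift c d t2)
  | App t1 t2 => App (lift c d t1) (lift c d t2)
  | ES t0 p u => ES (lift (c + nv p) d t0) p (lift c d u)
  end.

Fixpoint substk (k : nat) (t u : term) : term :=
  match t with
  | Var n => if n <? k then Var n else if n =? k then lift 0 k u else Var (n - 1)
  | Lam p t0 => Lam p (substk (k + nv p) t0 u)
  | Pair t1 t2 => Pair (substk k t1 u) (substk k t2 u)
  | App t1 t2 => App (substk k t1 u) (substk k t2 u)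
  | ES t0 p v => ES (substk (k + nv p) t0 u) p (substk k v u)
  end.

(* t{x/u} where x is the variable bound by the explicit substitution *)
Definition subst0 (t u : term) : term := substk 0 t u.

(* List contexts L ::= Box | L[p/u], head of the list = outermost [p/u].
   Plugging is (possibly) capturing: indices of the plugged term first
   refer to the binders of L. *)
Definition lctx := list (pat * term).

Fixpoint plug (L : lctx) (t : term) : term :=
  match L with
  | [] => t
  | (p, u) :: L' => ES (plug L' t) p u
  end.

Fixpoint nbv (L : lctx) : nat :=
  match L with [] => 0 | (p, _) :: L' => nv p + nbv L' end.

Definition abs (t : term) : Prop :=
  exists L p u, t = plug L (Lam p u).

Inductive kind : Type := Kb | Ke | Km.

(* Defined by structural
   recursion on t, since the rules contain negative premises "t -/->_h"
   on strict subterms.  The side conditions bv(L) # fv(u) of (b) and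
   bv(L) # fv(t) of (m) are realised by the shifts (alpha-renaming). *)
Fixpoint hstep (t : term) (k : kind) (v : term) {struct t} : Prop :=
  match t with
  | Var _ => False
  | Pair _ _ => False
  | Lam p t0 => exists t0', hstep t0 k t0' /\ v = Lam p t0'
  | App t1 u =>
      (k = Kb /\ exists L p t0, t1 = plug L (Lam p t0) /\
                                v = plug L (ES t0 p (lift 0 (nbv L) u)))
      \/
      (exists t1', hstep t1 k t1' /\ ~ abs t1 /\ v = App t1' u)
  | ES t0 p u =>
      (k = Km /\ exists p1 p2 L u1 u2,
          p = PP p1 p2 /\ u = plug L (Pair u1 u2) /\
          (forall k' w, ~ hstep t0 k' w) /\
          v = plug L (ES (ES (lift (nv p1 + nv p2) (nbv L) t0)
                             p1 (lift 0 (nv p2) u1)) p2 u2))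
      \/
      (k = Ke /\ p = PV /\ (forall k' w, ~ hstep t0 k' w) /\ v = subst0 t0 u)
      \/
      (exists t0', hstep t0 k t0' /\ v = ES t0' p u)
      \/
      ((forall k' w, ~ hstep t0 k' w) /\ p <> PV /\
       exists u', hstep u k u' /\ v = ES t0 p u')
  end.

Inductive hseq : term -> nat -> nat -> nat -> term -> Prop :=
| hseq_refl t : hseq t 0 0 0 t
| hseq_b t t' b e m u : hstep t Kb t' -> hseq t' b e m u -> hseq t (S b) e m u
| hseq_e t t' b e m u : hstep t Ke t' -> hseq t' b e m u -> hseq t b (S e) m u
| hseq_m t t' b e m u : hstep t Km t' -> hseq t' b e m u -> hseq t b e (S m) u.

Inductive canN : term -> Prop :=
| canN_var x : canN (Var x)
| canN_app n t : canN n -> canN (App n t)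
| canN_es n p1 p2 n' : canN n -> canN n' -> canN (ES n (PP p1 p2) n').

Inductive canM : term -> Prop :=
| canM_lam p m : canM m -> canM (Lam p m)
| canM_pair t u : canM (Pair t u)
| canM_es m p1 p2 n : canM m -> canN n -> canM (ES m (PP p1 p2) n)
| canM_N n : canN n -> canM n.

(* |.| (only meaningful on canonical forms) *)
Fixpoint csize (t : term) : nat :=
  match t with
  | Var _ => 0
  | Pair _ _ => 1
  | App n _ => csize n + 1
  | Lam _ m => csize m + 1
  | ES m _ n => csize m + csize n + 1
  end.

(* multi-types are finite multisets, represented as lists considered up
   to (deep) permutation, see teq/meq *)
Inductive ty : Type :=
| TN : ty
| TM : ty
| TProd : list ty -> list ty -> ty
| TArr : list ty -> ty -> ty.

Definition mty := list ty.

Inductive teq : ty -> ty -> Prop :=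
| teq_N : teq TN TN
| teq_M : teq TM TM
| teq_prod A1 A2 B1 B2 : meq A1 B1 -> meq A2 B2 -> teq (TProd A1 A2) (TProd B1 B2)
| teq_arr A B s s' : meq A B -> teq s s' -> teq (TArr A s) (TArr B s')
with meq : mty -> mty -> Prop :=
| meq_nil : meq [] []
| meq_skip s s' A B : teq s s' -> meq A B -> meq (s :: A) (s' :: B)
| meq_swap s1 s2 A : meq (s1 :: s2 :: A) (s2 :: s1 :: A)
| meq_trans A B C : meq A B -> meq B C -> meq A C.

Definition tight (s : ty) : Prop := s = TN \/ s = TM.

Definition ctx := nat -> mty.

Definition tight_ctx (G : ctx) : Prop := forall i, Forall tight (G i).

Definition ctx_empty : ctx := fun _ => [].
Definition ctx_single (x : nat) (A : mty) : ctx :=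
  fun i => if i =? x then A else [].
Definition ctx_union (G D : ctx) : ctx := fun i => G i ++ D i.
(* G|_p : restriction to the (first nv p) variables bound by p *)
Definition ctx_restr (n : nat) (G : ctx) : ctx :=
  fun i => if i <? n then G i else [].
(* G \ var(p) : removal of the variables bound by p *)
Definition ctx_drop (n : nat) (G : ctx) : ctx := fun i => G (i + n).

Inductive ptyp : ctx -> pat -> mty -> nat -> nat -> nat -> Prop :=
| pat_v G A :
    meq (G 0) A -> (forall i, i <> 0 -> G i = []) ->
    ptyp G PV A 1 0 0
| pat_x G G1 G2 p q A B ep mp fp eq mq fq :
    ptyp G1 p A ep mp fp -> ptyp G2 q B eq mq fq ->
    (forall i, meq (G i) (if i <? nv p then G1 i else G2 (i - nv p))) ->
    ptyp G (PP p q) [TProd A B] (ep + eq) (1 + mp + mq) (fp + fq)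
| pat_p G p q :
    (forall i, nv (PP p q) <= i -> G i = []) -> tight_ctx G ->
    ptyp G (PP p q) [TN] 0 0 1.

Inductive typ : ctx -> term -> ty -> nat -> nat -> nat -> nat -> Prop :=
| ty_ax x s : typ (ctx_single x [s]) (Var x) s 0 0 0 0
| ty_abs G t s p A b e m f ep mp fp :
    typ G t s b e m f -> ptyp (ctx_restr (nv p) G) p A ep mp fp ->
    typ (ctx_drop (nv p) G) (Lam p t) (TArr A s) (S b) (e + ep) (m + mp) (f + fp)
| ty_abs_p G t s p b e m f :
    typ G t s b e m f -> tight s ->
    tight_ctx (ctx_restr (nv p) G) ->
    typ (ctx_drop (nv p) G) (Lam p t) TM b e m (S f)
| ty_app G D t u A s bt et mt ft bu eu mu fu :
    typ G t (TArr A s) bt et mt ft -> mtyp D u A bu eu mu fu ->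
    typ (ctx_union G D) (App t u) s (bt + bu) (et + eu) (mt + mu) (ft + fu)
| ty_app_p G t u b e m f :
    typ G t TN b e m f -> typ G (App t u) TN b e m (S f)
| ty_pair G D t u A B bt et mt ft bu eu mu fu :
    mtyp G t A bt et mt ft -> mtyp D u B bu eu mu fu ->
    typ (ctx_union G D) (Pair t u) (TProd A B) (bt + bu) (et + eu) (mt + mu) (ft + fu)
| ty_pair_p t u : typ ctx_empty (Pair t u) TM 0 0 0 1
| ty_match G D t p u s A A' bt et mt ft ep mp fp bu eu mu fu :
    typ G t s bt et mt ft -> ptyp (ctx_restr (nv p) G) p A ep mp fp ->
    mtyp D u A' bu eu mu fu -> meq A A' ->
    typ (ctx_union (ctx_drop (nv p) G) D) (ES t p u) s
        (bt + bu) (et + eu + ep) (mt + mu + mp) (ft + fu + fp)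
(* multi-types are multisets: derivations are taken up to permutation *)
| ty_conv G G' t s s' b e m f :
    typ G t s b e m f -> (forall i, meq (G i) (G' i)) -> teq s s' ->
    typ G' t s' b e m f
with mtyp : ctx -> term -> mty -> nat -> nat -> nat -> nat -> Prop :=
| many_nil t : mtyp ctx_empty t [] 0 0 0 0
| many_cons G D t s A b1 e1 m1 f1 b2 e2 m2 f2 :
    typ G t s b1 e1 m1 f1 -> mtyp D t A b2 e2 m2 f2 ->
    mtyp (ctx_union G D) t (s :: A) (b1 + b2) (e1 + e2) (m1 + m2) (f1 + f2).

(* Quantitative subject reduction: a head step of kind (b), (e) or (m) turns a
   typing with counters (b,e,m,f) into one of its reduct with exactly one of b, e, m
   decreased and f unchanged, because the redex consumes exactly one rule (abs),
   (pat_v) or (pat_x) respectively.  Conversely, a head-normal term typed in a tight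
   context at a tight type is canonical, its counters b, e, m vanish, and f counts
   the persistent rules (abs_p, app_p, pair_p, pat_p), one per constructor of the
   canonical form, so f is its size.  Induction on b + e + m concludes. *)

From Stdlib Require Import List PeanoNat Wf_nat Lia Permutation FunctionalExtensionality Classical.
Import ListNotations.

Scheme typ_mut_ind := Induction for typ Sort Prop
  with mtyp_mut_ind := Induction for mtyp Sort Prop.
Combined Scheme typ_mtyp_ind from typ_mut_ind, mtyp_mut_ind.
Scheme teq_mut_ind := Induction for teq Sort Prop
  with meq_mut_ind := Induction for meq Sort Prop.

(** * Multiset equality *)

Fixpoint teq_refl (s : ty) : teq s s :=
  let fix meq_refl_list (A : mty) : meq A A :=
    match A with
    | [] => meq_nil
    | x :: A' => meq_skip _ _ _ _ (teq_refl x) (meq_refl_list A')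
    end in
  match s with
  | TN => teq_N
  | TM => teq_M
  | TProd A B => teq_prod _ _ _ _ (meq_refl_list A) (meq_refl_list B)
  | TArr A s0 => teq_arr _ _ _ _ (meq_refl_list A) (teq_refl s0)
  end.

Lemma meq_refl (A : mty) : meq A A.
Proof. induction A; constructor; auto using teq_refl. Qed.

Lemma teq_meq_sym :
  (forall s s', teq s s' -> teq s' s) /\ (forall A B, meq A B -> meq B A).
Proof.
  split;
    [ apply (teq_mut_ind (fun s s' _ => teq s' s) (fun A B _ => meq B A))
    | apply (meq_mut_ind (fun s s' _ => teq s' s) (fun A B _ => meq B A)) ];
    intros; solve [ constructor; assumption | constructor | eapply meq_trans; eassumption ].
Qed.

Lemma meq_sym (A B : mty) : meq A B -> meq B A.
Proof. apply teq_meq_sym. Qed.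

Lemma teq_trans (s1 s2 s3 : ty) : teq s1 s2 -> teq s2 s3 -> teq s1 s3.
Proof.
  intros H; revert s3; induction H; intros s3 H3; inversion H3; subst;
    constructor; eauto using meq_trans.
Qed.

Lemma meq_length (A B : mty) : meq A B -> length A = length B.
Proof. induction 1; simpl; congruence. Qed.

Lemma meq_nil_l (B : mty) : meq [] B -> B = [].
Proof. intros H; apply meq_length in H; destruct B; simpl in *; congruence. Qed.

Lemma meq_nil_r (B : mty) : meq B [] -> B = [].
Proof. intros H; apply meq_length in H; destruct B; simpl in *; congruence. Qed.

Lemma meq_single_l (a : ty) (B : mty) : meq [a] B -> exists b, B = [b] /\ teq a b.
Proof.
  intros H; remember [a] as A eqn:HA; revert a HA.
  induction H; intros a HA; try discriminate.
  - injection HA as -> ->. apply meq_nil_l in H0 as ->. eauto.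
  - destruct (IHmeq1 a HA) as (b & -> & Hab).
    destruct (IHmeq2 b eq_refl) as (c & -> & Hbc).
    eauto using teq_trans.
Qed.

Lemma Permutation_meq (A B : mty) : Permutation A B -> meq A B.
Proof. induction 1; eauto using meq, teq_refl. Qed.

Lemma meq_app (A B C D : mty) : meq A B -> meq C D -> meq (A ++ C) (B ++ D).
Proof.
  intros HAB HCD. apply meq_trans with (B ++ C).
  - induction HAB; simpl; eauto using meq, meq_refl.
  - clear HAB; induction B; simpl; [assumption | apply meq_skip; auto using teq_refl].
Qed.

Lemma tight_teq (s s' : ty) : teq s s' -> tight s -> tight s'.
Proof. intros H [-> | ->]; inversion H; red; auto. Qed.

Lemma Forall_tight_meq (A B : mty) : meq A B -> Forall tight A -> Forall tight B.
Proof.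
  induction 1; intros HF; auto.
  - inversion HF; subst; constructor; eauto using tight_teq.
  - inversion HF as [|? ? H1 HF']; inversion HF' as [|? ? H2 HA].
    constructor; [|constructor]; assumption.
Qed.

(** * Contexts *)

(* [ctx_ins c d] and [ctx_rm k] act on contexts as [lift c d] and [substk k] act on terms. *)
Definition ctx_ins (c d : nat) (G : ctx) : ctx :=
  fun i => if i <? c then G i else if i <? c + d then [] else G (i - d).

Definition ctx_rm (k : nat) (G : ctx) : ctx :=
  fun i => if i <? k then G i else G (S i).

Definition ctx_subst (k : nat) (G D : ctx) : ctx :=
  ctx_union (ctx_rm k G) (ctx_ins 0 k D).

Definition ceq (G G' : ctx) : Prop := forall i, meq (G i) (G' i).

Ltac ctx_ext :=
  apply functional_extensionality; intro i;
  unfold ctx_subst, ctx_ins, ctx_rm, ctx_drop, ctx_restr, ctx_union, ctx_single, ctx_empty;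
  repeat match goal with
         | |- context [?a <? ?b] => destruct (Nat.ltb_spec a b)
         | |- context [?a =? ?b] => destruct (Nat.eqb_spec a b)
         end;
  repeat rewrite app_nil_r; simpl; repeat rewrite app_assoc;
  try reflexivity; try (exfalso; lia); try (f_equal; lia);
  try (repeat match goal with |- _ ++ _ = _ ++ _ => f_equal end;
       try reflexivity; f_equal; lia).

Lemma ceq_refl (G : ctx) : ceq G G.
Proof. intro; apply meq_refl. Qed.

Lemma ceq_sym (G G' : ctx) : ceq G G' -> ceq G' G.
Proof. intros H i; apply meq_sym, H. Qed.

Lemma ceq_trans (G1 G2 G3 : ctx) : ceq G1 G2 -> ceq G2 G3 -> ceq G1 G3.
Proof. intros H1 H2 i; eapply meq_trans; eauto. Qed.

Lemma ceq_union (G G' D D' : ctx) :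
  ceq G G' -> ceq D D' -> ceq (ctx_union G D) (ctx_union G' D').
Proof. intros H1 H2 i; apply meq_app; auto. Qed.

Lemma ceq_ins (c d : nat) (G G' : ctx) : ceq G G' -> ceq (ctx_ins c d G) (ctx_ins c d G').
Proof.
  intros H i; unfold ctx_ins.
  destruct (i <? c); [|destruct (i <? c + d)]; [apply H | constructor | apply H].
Qed.

Lemma ceq_subst (k : nat) (G G' D D' : ctx) :
  ceq G G' -> ceq D D' -> ceq (ctx_subst k G D) (ctx_subst k G' D').
Proof.
  intros HG HD. apply ceq_union, ceq_ins; auto.
  intro i; unfold ctx_rm; destruct (i <? k); apply HG.
Qed.

Lemma ceq_of_Permutation (G G' : ctx) : (forall i, Permutation (G i) (G' i)) -> ceq G G'.
Proof. intros H i; apply Permutation_meq, H. Qed.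

Lemma ceq_union_interchange (G1 D1 G2 D2 : ctx) :
  ceq (ctx_union (ctx_union G1 D1) (ctx_union G2 D2))
      (ctx_union (ctx_union G1 G2) (ctx_union D1 D2)).
Proof.
  apply ceq_of_Permutation; intro i; unfold ctx_union.
  rewrite <- !app_assoc. apply Permutation_app_head.
  rewrite !app_assoc. apply Permutation_app_tail, Permutation_app_comm.
Qed.

Lemma ceq_union_swap_r (G D1 D2 : ctx) :
  ceq (ctx_union (ctx_union G D1) D2) (ctx_union (ctx_union G D2) D1).
Proof.
  apply ceq_of_Permutation; intro i; unfold ctx_union.
  rewrite <- !app_assoc. apply Permutation_app_head, Permutation_app_comm.
Qed.

Lemma ceq_subst_union (k : nat) (G1 G2 D1 D2 E1 E2 : ctx) :
  ceq E1 (ctx_subst k G1 D1) -> ceq E2 (ctx_subst k G2 D2) ->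
  ceq (ctx_union E1 E2) (ctx_subst k (ctx_union G1 G2) (ctx_union D1 D2)).
Proof.
  intros H1 H2.
  replace (ctx_subst k (ctx_union G1 G2) (ctx_union D1 D2))
    with (ctx_union (ctx_union (ctx_rm k G1) (ctx_rm k G2))
                    (ctx_union (ctx_ins 0 k D1) (ctx_ins 0 k D2))) by ctx_ext.
  eapply ceq_trans; [apply ceq_union; eassumption|].
  apply ceq_union_interchange.
Qed.

Lemma ctx_union_empty_l (G : ctx) : ctx_union ctx_empty G = G.
Proof. ctx_ext. Qed.

Lemma ctx_union_empty_r (G : ctx) : ctx_union G ctx_empty = G.
Proof. ctx_ext. Qed.

Lemma tight_ctx_ceq (G G' : ctx) : tight_ctx G -> ceq G G' -> tight_ctx G'.
Proof. intros H1 H2 i; eapply Forall_tight_meq; eauto. Qed.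

Lemma tight_ctx_union_inv (G D : ctx) :
  tight_ctx (ctx_union G D) -> tight_ctx G /\ tight_ctx D.
Proof.
  intros H; split; intro i; specialize (H i); apply Forall_app in H; tauto.
Qed.

Lemma tight_ctx_restr_drop (n : nat) (G : ctx) :
  tight_ctx (ctx_restr n G) -> tight_ctx (ctx_drop n G) -> tight_ctx G.
Proof.
  intros H1 H2 i. destruct (Nat.ltb_spec i n).
  - specialize (H1 i). unfold ctx_restr in H1. rewrite (proj2 (Nat.ltb_lt i n)) in H1; auto.
  - specialize (H2 (i - n)). unfold ctx_drop in H2. rewrite Nat.sub_add in H2; auto.
Qed.

(** * Typing up to multiset equality *)

Lemma ptyp_support (G : ctx) (p : pat) (A : mty) (e m f : nat) :
  ptyp G p A e m f -> forall i, nv p <= i -> G i = [].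
Proof.
  induction 1 as [G A _ HG | G G1 G2 p q A B ep mp fp eq mq fq _ IH1 _ IH2 HG | G p q HG _];
    intros i Hi; simpl in *.
  - apply HG; lia.
  - specialize (HG i). destruct (Nat.ltb_spec i (nv p)); [lia|].
    rewrite IH2 in HG by lia. apply meq_nil_r in HG; auto.
  - apply HG; simpl; lia.
Qed.

Lemma ptyp_ceq (G G' : ctx) (p : pat) (A : mty) (e m f : nat) :
  ptyp G p A e m f -> ceq G G' -> ptyp G' p A e m f.
Proof.
  intros Hp; revert G'; induction Hp; intros G' HG.
  - constructor; [eapply meq_trans; [apply meq_sym, HG | auto]|].
    intros i Hi. specialize (HG i). rewrite H0 in HG by auto. apply meq_nil_l in HG; auto.
  - econstructor; eauto. intros i. eapply meq_trans; [apply meq_sym, HG | auto].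
  - constructor; [|eapply tight_ctx_ceq; eauto].
    intros i Hi. specialize (HG i). rewrite H in HG by auto. apply meq_nil_l in HG; auto.
Qed.

Lemma ptyp_pair_single (G : ctx) (p1 p2 : pat) (A : mty) (e m f : nat) :
  ptyp G (PP p1 p2) A e m f -> exists s, A = [s].
Proof. inversion 1; eauto. Qed.

Lemma typ_eq_counts G t s b e m f b' e' m' f' :
  typ G t s b e m f -> b = b' -> e = e' -> m = m' -> f = f' -> typ G t s b' e' m' f'.
Proof. intros; subst; auto. Qed.

Lemma mtyp_eq_counts G t A b e m f b' e' m' f' :
  mtyp G t A b e m f -> b = b' -> e = e' -> m = m' -> f = f' -> mtyp G t A b' e' m' f'.
Proof. intros; subst; auto. Qed.

Lemma typ_eq_ctx G G' t s b e m f : typ G t s b e m f -> G = G' -> typ G' t s b e m f.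
Proof. intros; subst; auto. Qed.

Lemma typ_ceq G G' t s b e m f : typ G t s b e m f -> ceq G G' -> typ G' t s b e m f.
Proof. intros; eapply ty_conv; eauto using teq_refl. Qed.

Lemma typ_teq G t s s' b e m f : typ G t s b e m f -> teq s s' -> typ G t s' b e m f.
Proof. intros; eapply ty_conv; eauto using meq_refl. Qed.

Lemma mtyp_nil_inv D u b e m f :
  mtyp D u [] b e m f -> D = ctx_empty /\ b = 0 /\ e = 0 /\ m = 0 /\ f = 0.
Proof. inversion 1; auto. Qed.

Lemma mtyp_single_inv D u s b e m f : mtyp D u [s] b e m f -> typ D u s b e m f.
Proof.
  inversion 1 as [|? D0 ? ? ? ? ? ? ? ? ? ? ? Hs Hnil]; subst.
  apply mtyp_nil_inv in Hnil as (-> & -> & -> & -> & ->).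
  rewrite ctx_union_empty_r. eapply typ_eq_counts; eauto; lia.
Qed.

Lemma mtyp_app_inv (X Y : mty) D u b e m f :
  mtyp D u (X ++ Y) b e m f ->
  exists D1 D2 b1 e1 m1 f1 b2 e2 m2 f2,
    D = ctx_union D1 D2 /\ b = b1 + b2 /\ e = e1 + e2 /\ m = m1 + m2 /\ f = f1 + f2 /\
    mtyp D1 u X b1 e1 m1 f1 /\ mtyp D2 u Y b2 e2 m2 f2.
Proof.
  revert D b e m f; induction X as [|s X IH]; simpl; intros D b e m f H.
  - exists ctx_empty, D, 0, 0, 0, 0, b, e, m, f.
    rewrite ctx_union_empty_l. repeat split; auto. constructor.
  - inversion H as [|G D' ? ? ? bs es ms fs ? ? ? ? Hs HXY]; subst.
    destruct (IH _ _ _ _ _ HXY)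
      as (D1 & D2 & bx & ex & mx & fx & by' & ey & my & fy & -> & -> & -> & -> & -> & H1 & H2).
    exists (ctx_union G D1), D2, (bs + bx), (es + ex), (ms + mx), (fs + fx), by', ey, my, fy.
    repeat split; try lia; [ctx_ext | constructor; auto | auto].
Qed.

Lemma mtyp_meq (A B : mty) D u b e m f :
  meq A B -> mtyp D u A b e m f -> exists D', ceq D D' /\ mtyp D' u B b e m f.
Proof.
  intros HAB; revert D b e m f; induction HAB; intros D b e m f Hm.
  - exists D; split; auto using ceq_refl.
  - inversion Hm as [|G D0 ? ? ? ? ? ? ? ? ? ? ? Hs HA]; subst.
    destruct (IHHAB _ _ _ _ _ HA) as (D' & HD & HD').
    exists (ctx_union G D'); split; [apply ceq_union; auto using ceq_refl|].
    constructor; eauto using typ_teq.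
  - inversion Hm as [|G D0 ? ? ? ? ? ? ? ? ? ? ? Hs1 HA]; subst.
    inversion HA as [|G' D1 ? ? ? ? ? ? ? ? ? ? ? Hs2 HA']; subst.
    exists (ctx_union G' (ctx_union G D1)); split.
    + apply ceq_of_Permutation; intro i; unfold ctx_union.
      rewrite !app_assoc. apply Permutation_app_tail, Permutation_app_comm.
    + eapply mtyp_eq_counts; [constructor; [eassumption | constructor; eassumption] | lia..].
  - destruct (IHHAB1 _ _ _ _ _ Hm) as (D1 & HD1 & H1).
    destruct (IHHAB2 _ _ _ _ _ H1) as (D2 & HD2 & H2).
    exists D2; split; eauto using ceq_trans.
Qed.

(** * Weakening and substitution *)

Lemma lift_add (t : term) (c a b : nat) : lift c a (lift c b t) = lift c (a + b) t.
Proof.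
  revert c; induction t; intros c; simpl; f_equal; auto.
  destruct (Nat.ltb_spec n c); simpl.
  - rewrite (proj2 (Nat.ltb_lt n c)); auto.
  - destruct (Nat.ltb_spec (n + b) c); lia.
Qed.

Lemma lift_zero (t : term) (c : nat) : lift c 0 t = t.
Proof.
  revert c; induction t; intros c; simpl; f_equal; auto.
  destruct (n <? c); lia.
Qed.

Lemma ctx_ins_union (c d : nat) (G D : ctx) :
  ctx_ins c d (ctx_union G D) = ctx_union (ctx_ins c d G) (ctx_ins c d D).
Proof. ctx_ext. Qed.

Lemma ctx_ins_empty (c d : nat) : ctx_ins c d ctx_empty = ctx_empty.
Proof. ctx_ext. Qed.

Lemma ctx_restr_ins (n c d : nat) (G : ctx) :
  ctx_restr n (ctx_ins (c + n) d G) = ctx_restr n G.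
Proof. ctx_ext. Qed.

Lemma ctx_drop_ins (n c d : nat) (G : ctx) :
  ctx_drop n (ctx_ins (c + n) d G) = ctx_ins c d (ctx_drop n G).
Proof. ctx_ext. Qed.

Lemma ctx_restr_union_ins (n : nat) (G D : ctx) :
  ctx_restr n (ctx_union G (ctx_ins 0 n D)) = ctx_restr n G.
Proof. ctx_ext. Qed.

Lemma ctx_drop_union_ins (n : nat) (G D : ctx) :
  ctx_drop n (ctx_union G (ctx_ins 0 n D)) = ctx_union (ctx_drop n G) D.
Proof. ctx_ext. Qed.

Lemma typ_mtyp_lift :
  (forall G t s b e m f, typ G t s b e m f ->
     forall c d, typ (ctx_ins c d G) (lift c d t) s b e m f) /\
  (forall G t A b e m f, mtyp G t A b e m f ->
     forall c d, mtyp (ctx_ins c d G) (lift c d t) A b e m f).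
Proof.
  apply typ_mtyp_ind; intros; simpl; intros;
    rewrite ?ctx_ins_union, ?ctx_ins_empty;
    try (rewrite <- (ctx_drop_ins (nv p) c d));
    try solve [econstructor; eauto; rewrite ?ctx_restr_ins; eauto].
  - eapply typ_eq_ctx; [apply ty_ax | ctx_ext].
  - eapply ty_conv; [eauto | apply ceq_ins; assumption | assumption].
Qed.

Definition typ_lift := proj1 typ_mtyp_lift.
Definition mtyp_lift := proj2 typ_mtyp_lift.

Lemma ctx_restr_subst (n k : nat) (G D : ctx) :
  ctx_restr n (ctx_subst (k + n) G D) = ctx_restr n G.
Proof. ctx_ext. Qed.

Lemma ctx_drop_subst (n k : nat) (G D : ctx) :
  ctx_drop n (ctx_subst (k + n) G D) = ctx_subst k (ctx_drop n G) D.
Proof. ctx_ext. Qed.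

Lemma typ_substk_var (x k : nat) (s : ty) u D bu eu mu fu :
  mtyp D u (ctx_single x [s] k) bu eu mu fu ->
  typ (ctx_subst k (ctx_single x [s]) D) (substk k (Var x) u) s bu eu mu fu.
Proof.
  intros Hu; unfold ctx_single in Hu; simpl.
  destruct (Nat.eqb_spec k x) as [<- | Hkx].
  - rewrite Nat.ltb_irrefl, Nat.eqb_refl.
    eapply typ_eq_ctx; [apply typ_lift, mtyp_single_inv, Hu | ctx_ext].
  - apply mtyp_nil_inv in Hu as (-> & -> & -> & -> & ->).
    destruct (Nat.ltb_spec x k); [|destruct (Nat.eqb_spec x k); [lia|]];
      (eapply typ_eq_ctx; [apply ty_ax | ctx_ext]).
Qed.

Definition substk_typed (G : ctx) (t : term) (s : ty) (b e m f : nat) : Prop :=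
  forall k u D bu eu mu fu, mtyp D u (G k) bu eu mu fu ->
  typ (ctx_subst k G D) (substk k t u) s (b + bu) (e + eu) (m + mu) (f + fu).

Definition substk_mtyped (G : ctx) (t : term) (A : mty) (b e m f : nat) : Prop :=
  forall k u D bu eu mu fu, mtyp D u (G k) bu eu mu fu ->
  exists D', ceq D' (ctx_subst k G D) /\
             mtyp D' (substk k t u) A (b + bu) (e + eu) (m + mu) (f + fu).

Lemma substk_typed_ES G D1 t p u1 s A A' bt et mt ft ep mp fp bu1 eu1 mu1 fu1 :
  substk_typed G t s bt et mt ft -> ptyp (ctx_restr (nv p) G) p A ep mp fp ->
  substk_mtyped D1 u1 A' bu1 eu1 mu1 fu1 -> meq A A' ->
  substk_typed (ctx_union (ctx_drop (nv p) G) D1) (ES t p u1) s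
               (bt + bu1) (et + eu1 + ep) (mt + mu1 + mp) (ft + fu1 + fp).
Proof.
  intros IHt Hp IHu HA k u D bu eu mu fu Hu; simpl.
  apply mtyp_app_inv in Hu
    as (Dx & Dy & bx & ex & mx & fx & by' & ey & my & fy & -> & -> & -> & -> & -> & Hx & Hy).
  destruct (IHu k u Dy _ _ _ _ Hy) as (D' & HD' & Hu').
  rewrite <- (ctx_restr_subst (nv p) k G Dx) in Hp.
  eapply typ_ceq.
  - eapply typ_eq_counts; [eapply ty_match; [apply IHt, Hx | exact Hp | exact Hu' | exact HA] | lia..].
  - rewrite ctx_drop_subst. apply ceq_subst_union; auto using ceq_refl.
Qed.

Lemma typ_mtyp_substk :
  (forall G t s b e m f, typ G t s b e m f -> substk_typed G t s b e m f) /\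
  (forall G t A b e m f, mtyp G t A b e m f -> substk_mtyped G t A b e m f).
Proof.
  apply typ_mtyp_ind; unfold substk_typed, substk_mtyped; simpl.
  - intros; apply typ_substk_var; assumption.
  - intros G t s p A b e m f ep mp fp _ IH Hp k u D bu eu mu fu Hu.
    rewrite <- (ctx_restr_subst (nv p) k G D) in Hp. rewrite <- ctx_drop_subst.
    eapply typ_eq_counts; [eapply ty_abs; [apply IH, Hu | exact Hp] | lia..].
  - intros G t s p b e m f _ IH Hs Hp k u D bu eu mu fu Hu.
    rewrite <- (ctx_restr_subst (nv p) k G D) in Hp. rewrite <- ctx_drop_subst.
    eapply typ_eq_counts; [eapply ty_abs_p; [apply IH, Hu | exact Hs | exact Hp] | lia..].
  - intros G D1 t u1 A s bt et mt ft bu1 eu1 mu1 fu1 _ IHt _ IHu k u D bu eu mu fu Hu.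
    apply mtyp_app_inv in Hu
      as (Dx & Dy & bx & ex & mx & fx & by' & ey & my & fy & -> & -> & -> & -> & -> & Hx & Hy).
    destruct (IHu k u Dy _ _ _ _ Hy) as (D' & HD' & Hu').
    eapply typ_ceq; [eapply typ_eq_counts; [eapply ty_app; [apply IHt, Hx | exact Hu'] | lia..]|].
    apply ceq_subst_union; auto using ceq_refl.
  - intros G t u1 b e m f _ IH k u D bu eu mu fu Hu. apply ty_app_p, IH, Hu.
  - intros G D1 t u1 A B bt et mt ft bu1 eu1 mu1 fu1 _ IHt _ IHu k u D bu eu mu fu Hu.
    apply mtyp_app_inv in Hu
      as (Dx & Dy & bx & ex & mx & fx & by' & ey & my & fy & -> & -> & -> & -> & -> & Hx & Hy).
    destruct (IHt k u Dx _ _ _ _ Hx) as (D0 & HD0 & Ht').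
    destruct (IHu k u Dy _ _ _ _ Hy) as (D' & HD' & Hu').
    eapply typ_ceq; [eapply typ_eq_counts; [eapply ty_pair; [exact Ht' | exact Hu'] | lia..]|].
    apply ceq_subst_union; assumption.
  - intros t u1 k u D bu eu mu fu Hu.
    apply mtyp_nil_inv in Hu as (-> & -> & -> & -> & ->).
    eapply typ_eq_ctx; [apply ty_pair_p | ctx_ext].
  - intros; eapply substk_typed_ES; eassumption.
  - intros G G' t s s' b e m f _ IH Hc Hs k u D bu eu mu fu Hu.
    destruct (mtyp_meq _ _ _ _ _ _ _ _ (meq_sym _ _ (Hc k)) Hu) as (D' & HD & Hu').
    eapply ty_conv; [apply IH, Hu' | apply ceq_subst; [exact Hc | apply ceq_sym, HD] | exact Hs].
  - intros t k u D bu eu mu fu Hu.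
    apply mtyp_nil_inv in Hu as (-> & -> & -> & -> & ->).
    exists ctx_empty; split; [|constructor].
    replace (ctx_subst k ctx_empty ctx_empty) with ctx_empty by ctx_ext. apply ceq_refl.
  - intros G D1 t s A b1 e1 m1 f1 b2 e2 m2 f2 _ IHt _ IHA k u D bu eu mu fu Hu.
    apply mtyp_app_inv in Hu
      as (Dx & Dy & bx & ex & mx & fx & by' & ey & my & fy & -> & -> & -> & -> & -> & Hx & Hy).
    destruct (IHA k u Dy _ _ _ _ Hy) as (D' & HD' & HA').
    eexists; split;
      [|eapply mtyp_eq_counts; [constructor; [apply IHt, Hx | exact HA'] | lia..]].
    apply ceq_subst_union; auto using ceq_refl.
Qed.

Definition typ_substk := proj1 typ_mtyp_substk.

(** * Subject reduction *)

Definition step_count (k : kind) (b e m b' e' m' : nat) : Prop :=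
  match k with
  | Kb => b = S b' /\ e = e' /\ m = m'
  | Ke => b = b' /\ e = S e' /\ m = m'
  | Km => b = b' /\ e = e' /\ m = S m'
  end.

Definition typ_reduct (k : kind) (G : ctx) (t : term) (s : ty) (b e m f : nat) : Prop :=
  exists b' e' m', step_count k b e m b' e' m' /\ typ G t s b' e' m' f.

Lemma typ_reduct_conv k G G' t s s' b e m f :
  typ_reduct k G t s b e m f -> ceq G G' -> teq s s' -> typ_reduct k G' t s' b e m f.
Proof.
  intros (b' & e' & m' & Hk & Ht) HG Hs.
  exists b', e', m'; split; [exact Hk | eapply ty_conv; eauto].
Qed.

Lemma typ_plug_Lam_not_TN G L p t s b e m f :
  typ G (plug L (Lam p t)) s b e m f -> s <> TN.
Proof.
  intros H; remember (plug L (Lam p t)) as w eqn:Hw; revert L Hw.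
  induction H; intros L Hw; try (destruct L as [|[q v] L]; discriminate); try discriminate.
  - destruct L as [|[q v] L]; [discriminate|]. injection Hw as Hw. eauto.
  - intros ->. inversion H1; subst. eapply IHtyp; eauto.
Qed.

Lemma typ_plug_Pair_not_TN G L u1 u2 s b e m f :
  typ G (plug L (Pair u1 u2)) s b e m f -> s <> TN.
Proof.
  intros H; remember (plug L (Pair u1 u2)) as w eqn:Hw; revert L Hw.
  induction H; intros L Hw; try (destruct L as [|[q v] L]; discriminate); try discriminate.
  - destruct L as [|[q v] L]; [discriminate|]. injection Hw as Hw. eauto.
  - intros ->. inversion H1; subst. eapply IHtyp; eauto.
Qed.

Lemma typ_contract_b G L p t A s b e m f :
  typ G (plug L (Lam p t)) (TArr A s) b e m f ->
  forall D u A' bu eu mu fu, mtyp D u A' bu eu mu fu -> meq A A' ->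
  typ_reduct Kb (ctx_union G D) (plug L (ES t p (lift 0 (nbv L) u))) s
             (b + bu) (e + eu) (m + mu) (f + fu).
Proof.
  intros H; remember (plug L (Lam p t)) as w eqn:Hw; remember (TArr A s) as sA eqn:Hs.
  revert L A s Hw Hs.
  induction H as [ | G t0 s0 p0 A0 b e m f ep mp fp Ht _ Hp | | | | |
                  | G D0 t0 q v s0 Aq Aq' bt et mt ft ep mp fp bv ev mv fv Ht IH Hq Hv HAq
                  | G G' t0 s0 s0' b e m f _ IH Hc Hs0 ];
    intros L A1 s1 Hw Hs; try (destruct L as [|[q' v'] L]; discriminate);
    intros D u A' bu eu mu fu Hu HA.
  - destruct L as [|[q v] L]; [|discriminate]. injection Hw as -> ->. injection Hs as -> ->.
    exists (b + bu), (e + eu + ep), (m + mu + mp); split; [simpl; lia|].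
    simpl; rewrite lift_zero. eapply typ_eq_counts; [eapply ty_match; eauto | lia..].
  - destruct L as [|[q' v'] L]; [discriminate|]. injection Hw as Hw <- <-. subst s0.
    destruct (IH L A1 s1 Hw eq_refl (ctx_ins 0 (nv q) D) (lift 0 (nv q) u) A' bu eu mu fu
                 (mtyp_lift _ _ _ _ _ _ _ Hu 0 (nv q)) HA) as (b' & e' & m' & Hk & Hred).
    rewrite lift_add, Nat.add_comm in Hred.
    exists (b' + bv), (e' + ev + ep), (m' + mv + mp); split; [simpl in *; lia|].
    rewrite <- (ctx_restr_union_ins (nv q) G D) in Hq.
    eapply typ_ceq; [eapply typ_eq_counts; [eapply ty_match; eassumption | reflexivity.. | lia]|].
    rewrite ctx_drop_union_ins. apply ceq_union_swap_r.
  - subst s0'. inversion Hs0 as [| | | Ax Ay sx sy HAxy Hsxy]; subst.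
    eapply typ_reduct_conv; [eapply IH; eauto using meq_trans | | exact Hsxy].
    apply ceq_union; auto using ceq_refl.
Qed.

Lemma ptyp_pair_components G G1 G2 p1 p2 A B ep1 mp1 fp1 ep2 mp2 fp2 :
  ptyp G1 p1 A ep1 mp1 fp1 -> ptyp G2 p2 B ep2 mp2 fp2 ->
  (forall i, meq (ctx_restr (nv p1 + nv p2) G i)
                 (if i <? nv p1 then G1 i else G2 (i - nv p1))) ->
  ptyp (ctx_restr (nv p1) G) p1 A ep1 mp1 fp1 /\
  ptyp (ctx_restr (nv p2) (ctx_drop (nv p1) G)) p2 B ep2 mp2 fp2.
Proof.
  intros H1 H2 HR; split; (eapply ptyp_ceq; [eassumption|]); intro i; unfold ctx_restr, ctx_drop.
  - destruct (Nat.ltb_spec i (nv p1)).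
    + specialize (HR i). unfold ctx_restr in HR.
      destruct (Nat.ltb_spec i (nv p1 + nv p2)), (Nat.ltb_spec i (nv p1)); try lia.
      apply meq_sym, HR.
    + rewrite (ptyp_support _ _ _ _ _ _ H1 i) by lia. constructor.
  - destruct (Nat.ltb_spec i (nv p2)).
    + specialize (HR (i + nv p1)). unfold ctx_restr in HR.
      destruct (Nat.ltb_spec (i + nv p1) (nv p1 + nv p2)),
               (Nat.ltb_spec (i + nv p1) (nv p1)); try lia.
      rewrite Nat.add_sub in HR. apply meq_sym, HR.
    + rewrite (ptyp_support _ _ _ _ _ _ H2 i) by lia. constructor.
Qed.

Lemma typ_contract_m_components D L u1 u2 X Y bu eu mu fu :
  typ D (plug L (Pair u1 u2)) (TProd X Y) bu eu mu fu ->
  forall G t s p1 p2 A B bt et mt ft ep1 mp1 fp1 ep2 mp2 fp2,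
  typ G t s bt et mt ft ->
  ptyp (ctx_restr (nv p1) G) p1 A ep1 mp1 fp1 ->
  ptyp (ctx_restr (nv p2) (ctx_drop (nv p1) G)) p2 B ep2 mp2 fp2 ->
  meq A X -> meq B Y ->
  typ (ctx_union (ctx_drop (nv p1 + nv p2) G) D)
      (plug L (ES (ES (lift (nv p1 + nv p2) (nbv L) t) p1 (lift 0 (nv p2) u1)) p2 u2)) s
      (bt + bu) (et + eu + ep1 + ep2) (mt + mu + mp1 + mp2) (ft + fu + fp1 + fp2).
Proof.
  intros H; remember (plug L (Pair u1 u2)) as w eqn:Hw; remember (TProd X Y) as sXY eqn:Hs.
  revert L X Y Hw Hs.
  induction H as [ | | | | | D1 D2 v1 v2 X0 Y0 b1 e1 m1 f1 b2 e2 m2 f2 Hv1 Hv2 |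
                  | D0 Dv w q v s0 Aq Aq' bw ew mw fw ep mp fp bv ev mv fv Hw0 IH Hq Hv HAq
                  | D0 D0' w s0 s0' bw ew mw fw _ IH Hc Hs0 ];
    intros L X Y Hw Hs; try (destruct L as [|[q' v'] L]; discriminate);
    intros G t s p1 p2 A B bt et mt ft ep1 mp1 fp1 ep2 mp2 fp2 Ht Hp1 Hp2 HAX HBY.
  - destruct L as [|[q v] L]; [|discriminate]. injection Hw as -> ->. injection Hs as -> ->.
    simpl; rewrite lift_zero.
    assert (Hinner : typ (ctx_union (ctx_drop (nv p1) G) (ctx_ins 0 (nv p2) D1))
                         (ES t p1 (lift 0 (nv p2) u1)) s
                         (bt + b1) (et + e1 + ep1) (mt + m1 + mp1) (ft + f1 + fp1))
      by (eapply ty_match; [exact Ht | exact Hp1 | apply mtyp_lift, Hv1 | exact HAX]).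
    rewrite <- (ctx_restr_union_ins (nv p2) (ctx_drop (nv p1) G) D1) in Hp2.
    eapply typ_eq_ctx; [eapply typ_eq_counts; [eapply ty_match; eassumption | lia..]|].
    ctx_ext.
  - destruct L as [|[q' v'] L]; [discriminate|]. injection Hw as Hw <- <-. subst s0.
    pose proof (typ_lift _ _ _ _ _ _ _ Ht (nv p1 + nv p2) (nv q)) as Ht'.
    rewrite <- (ctx_restr_ins (nv p1) (nv p2) (nv q)), (Nat.add_comm (nv p2)) in Hp1.
    assert (Hp2' : ptyp (ctx_restr (nv p2) (ctx_drop (nv p1) (ctx_ins (nv p1 + nv p2) (nv q) G)))
                        p2 B ep2 mp2 fp2)
      by (replace (ctx_restr (nv p2) (ctx_drop (nv p1) (ctx_ins (nv p1 + nv p2) (nv q) G)))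
            with (ctx_restr (nv p2) (ctx_drop (nv p1) G)) by ctx_ext; exact Hp2).
    pose proof (IH L X Y Hw eq_refl _ _ _ _ _ _ _ _ _ _ _ _ _ _ _ _ _ Ht' Hp1 Hp2' HAX HBY)
      as Hbody.
    rewrite lift_add, (Nat.add_comm (nbv L)) in Hbody.
    assert (Hq' : ptyp (ctx_restr (nv q) (ctx_union (ctx_drop (nv p1 + nv p2)
                          (ctx_ins (nv p1 + nv p2) (nv q) G)) D0)) q Aq ep mp fp)
      by (replace (ctx_restr (nv q) _) with (ctx_restr (nv q) D0) by ctx_ext; exact Hq).
    eapply typ_eq_ctx; [eapply typ_eq_counts; [eapply ty_match; eassumption | lia..]|].
    ctx_ext.
  - subst s0'. inversion Hs0 as [| | X1 X2 Y1 Y2 HX HY | ]; subst.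
    eapply ty_conv;
      [eapply IH; eauto using meq_trans, meq_sym | apply ceq_union; auto using ceq_refl | apply teq_refl].
Qed.

Lemma typ_contract_m G t s p1 p2 A L u1 u2 A' D bt et mt ft ep mp fp bu eu mu fu :
  typ G t s bt et mt ft ->
  ptyp (ctx_restr (nv p1 + nv p2) G) (PP p1 p2) A ep mp fp ->
  mtyp D (plug L (Pair u1 u2)) A' bu eu mu fu -> meq A A' ->
  typ_reduct Km (ctx_union (ctx_drop (nv p1 + nv p2) G) D)
    (plug L (ES (ES (lift (nv p1 + nv p2) (nbv L) t) p1 (lift 0 (nv p2) u1)) p2 u2)) s
    (bt + bu) (et + eu + ep) (mt + mu + mp) (ft + fu + fp).
Proof.
  intros Ht Hp Hu HA.
  inversion Hp as [| ? G1 G2 ? ? A1 B1 ep1 mp1 fp1 ep2 mp2 fp2 Hp1 Hp2 HR | ]; subst;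
    apply meq_single_l in HA as (s' & -> & Hs'); apply mtyp_single_inv in Hu;
    inversion Hs'; subst.
  - destruct (ptyp_pair_components _ _ _ _ _ _ _ _ _ _ _ _ _ Hp1 Hp2 HR) as [Hp1' Hp2'].
    exists (bt + bu), (et + eu + (ep1 + ep2)), (mt + mu + mp1 + mp2); split; [simpl; lia|].
    eapply typ_eq_counts; [eapply typ_contract_m_components; eassumption | lia..].
  - exfalso. eapply typ_plug_Pair_not_TN; eauto.
Qed.

Lemma typ_contract_e G t s A u A' D bt et mt ft ep mp fp bu eu mu fu :
  typ G t s bt et mt ft -> ptyp (ctx_restr 1 G) PV A ep mp fp ->
  mtyp D u A' bu eu mu fu -> meq A A' ->
  typ_reduct Ke (ctx_union (ctx_drop 1 G) D) (subst0 t u) s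
    (bt + bu) (et + eu + ep) (mt + mu + mp) (ft + fu + fp).
Proof.
  intros Ht Hp Hu HA.
  inversion Hp as [? ? HG0 _ | | ]; subst.
  destruct (mtyp_meq _ _ _ _ _ _ _ _ (meq_sym _ _ (meq_trans _ _ _ HG0 HA)) Hu) as (D' & HD & Hu').
  exists (bt + bu), (et + eu), (mt + mu); split; [simpl; lia|].
  eapply typ_ceq; [eapply typ_eq_counts; [apply (typ_substk _ _ _ _ _ _ _ Ht 0 _ _ _ _ _ _ Hu') | lia..]|].
  replace (ctx_subst 0 G D') with (ctx_union (ctx_drop 1 G) D') by ctx_ext.
  apply ceq_union; [apply ceq_refl | apply ceq_sym, HD].
Qed.

Lemma mtyp_single D u s b e m f : typ D u s b e m f -> mtyp D u [s] b e m f.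
Proof.
  intros H; rewrite <- (ctx_union_empty_r D).
  eapply mtyp_eq_counts; [constructor; [exact H | constructor] | lia..].
Qed.

Definition reducts_typed (G : ctx) (t : term) (s : ty) (b e m f : nat) : Prop :=
  forall k t', hstep t k t' -> typ_reduct k G t' s b e m f.

Lemma reducts_typed_ES G D t p u s A A' bt et mt ft ep mp fp bu eu mu fu :
  typ G t s bt et mt ft -> reducts_typed G t s bt et mt ft ->
  ptyp (ctx_restr (nv p) G) p A ep mp fp ->
  mtyp D u A' bu eu mu fu -> (forall s', A' = [s'] -> reducts_typed D u s' bu eu mu fu) ->
  meq A A' ->
  reducts_typed (ctx_union (ctx_drop (nv p) G) D) (ES t p u) s
                (bt + bu) (et + eu + ep) (mt + mu + mp) (ft + fu + fp).
Proof.
  intros Ht IHt Hp Hu IHu HA k v H; simpl in H.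
  destruct H as [Hm | [He | [Hbody | Harg]]].
  - destruct Hm as (-> & p1 & p2 & L & u1 & u2 & -> & -> & _ & ->).
    eapply typ_contract_m; eassumption.
  - destruct He as (-> & -> & _ & ->).
    eapply typ_contract_e; eassumption.
  - destruct Hbody as (t' & Hstep & ->).
    destruct (IHt _ _ Hstep) as (b' & e' & m' & Hk & Ht').
    exists (b' + bu), (e' + eu + ep), (m' + mu + mp); split; [destruct k; simpl in *; lia|].
    eapply ty_match; eassumption.
  - destruct Harg as (_ & Hpv & u' & Hstep & ->).
    destruct p as [|p1 p2]; [contradiction|].
    destruct (ptyp_pair_single _ _ _ _ _ _ _ Hp) as [sA ->].
    destruct (meq_single_l _ _ HA) as (s' & -> & _).
    destruct (IHu s' eq_refl _ _ Hstep) as (b' & e' & m' & Hk & Hu').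
    exists (bt + b'), (et + e' + ep), (mt + m' + mp); split; [destruct k; simpl in *; lia|].
    eapply ty_match; [eassumption | eassumption | apply mtyp_single, Hu' | exact HA].
Qed.

Lemma typ_mtyp_reducts :
  (forall G t s b e m f, typ G t s b e m f -> reducts_typed G t s b e m f) /\
  (forall G t A b e m f, mtyp G t A b e m f ->
     forall s, A = [s] -> reducts_typed G t s b e m f).
Proof.
  apply typ_mtyp_ind; unfold reducts_typed; simpl.
  - intros; contradiction.
  - intros G t s p A b e m f ep mp fp _ IH Hp k v (t' & Hstep & ->).
    destruct (IH _ _ Hstep) as (b' & e' & m' & Hk & Ht').
    exists (S b'), (e' + ep), (m' + mp); split; [destruct k; simpl in *; lia|].
    eapply ty_abs; eassumption.
  - intros G t s p b e m f _ IH Hs Hp k v (t' & Hstep & ->).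
    destruct (IH _ _ Hstep) as (b' & e' & m' & Hk & Ht').
    exists b', e', m'; split; [exact Hk|].
    eapply ty_abs_p; eassumption.
  - intros G D t u A s bt et mt ft bu eu mu fu Ht IHt Hu _ k v
      [(-> & L & p & t0 & -> & ->) | (t' & Hstep & _ & ->)].
    + eapply typ_contract_b; [exact Ht | exact Hu | apply meq_refl].
    + destruct (IHt _ _ Hstep) as (b' & e' & m' & Hk & Ht').
      exists (b' + bu), (e' + eu), (m' + mu); split; [destruct k; simpl in *; lia|].
      eapply ty_app; eassumption.
  - intros G t u b e m f Ht IHt k v [(-> & L & p & t0 & -> & ->) | (t' & Hstep & _ & ->)].
    + exfalso. eapply typ_plug_Lam_not_TN; eauto.
    + destruct (IHt _ _ Hstep) as (b' & e' & m' & Hk & Ht').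
      exists b', e', m'; split; [exact Hk | apply ty_app_p, Ht'].
  - intros; contradiction.
  - intros; contradiction.
  - intros; eapply reducts_typed_ES; eassumption.
  - intros G G' t s s' b e m f _ IH Hc Hs k v Hstep.
    eapply typ_reduct_conv; [apply IH, Hstep | exact Hc | exact Hs].
  - intros t s Hs. discriminate.
  - intros G D t s A b1 e1 m1 f1 b2 e2 m2 f2 _ IH HA _ s' Hs k v Hstep.
    injection Hs as -> ->. apply mtyp_nil_inv in HA as (-> & -> & -> & -> & ->).
    rewrite ctx_union_empty_r, !Nat.add_0_r. apply IH, Hstep.
Qed.

Lemma typ_hstep G t s b e m f k t' :
  typ G t s b e m f -> hstep t k t' -> typ_reduct k G t' s b e m f.
Proof. intros Ht; exact (proj1 typ_mtyp_reducts _ _ _ _ _ _ _ Ht k t'). Qed.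

(** * Head-normal forms *)

Definition normal (t : term) : Prop := forall k t', ~ hstep t k t'.

Lemma normal_Lam p t : normal (Lam p t) -> normal t.
Proof. intros Hn k t' H. apply (Hn k (Lam p t')). simpl; eauto. Qed.

Lemma normal_App t u : normal (App t u) -> normal t /\ ~ abs t.
Proof.
  intros Hn.
  assert (Habs : ~ abs t).
  { intros (L & p & t0 & ->). apply (Hn Kb (plug L (ES t0 p (lift 0 (nbv L) u)))).
    simpl; left; eauto 10. }
  split; [|exact Habs].
  intros k t' H. apply (Hn k (App t' u)). simpl; right; eauto.
Qed.

Lemma normal_ES t p u : normal (ES t p u) ->
  normal t /\ p <> PV /\ normal u /\ ~ (exists L u1 u2, u = plug L (Pair u1 u2)).
Proof.
  intros Hn.
  assert (Ht : normal t) by (intros k t' H; apply (Hn k (ES t' p u)); simpl; eauto 6).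
  assert (Hp : p <> PV) by (intros ->; apply (Hn Ke (subst0 t u)); simpl; eauto 6).
  repeat split; auto.
  - intros k u' H. apply (Hn k (ES t p u')). simpl. right; right; right. eauto.
  - intros (L & u1 & u2 & ->). destruct p as [|p1 p2]; [contradiction|].
    apply (Hn Km (plug L (ES (ES (lift (nv p1 + nv p2) (nbv L) t) p1 (lift 0 (nv p2) u1)) p2 u2))).
    simpl; left; split; [reflexivity|]. exists p1, p2, L, u1, u2; auto.
Qed.

Definition nf_spec (s : ty) (t : term) (b e m f : nat) : Prop :=
  match s with
  | TN => canN t /\ b = 0 /\ e = 0 /\ m = 0 /\ csize t = f
  | TM => canM t /\ b = 0 /\ e = 0 /\ m = 0 /\ csize t = f
  | TProd _ _ => exists L u1 u2, t = plug L (Pair u1 u2)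
  | TArr _ _ => abs t
  end.

Lemma nf_spec_tight s t b e m f :
  tight s -> nf_spec s t b e m f -> canM t /\ b = 0 /\ e = 0 /\ m = 0 /\ csize t = f.
Proof.
  intros [-> | ->]; simpl; [intros (Hc & ?) | intros (Hc & ?)]; split; auto using canM.
Qed.

Lemma nf_spec_teq s s' t b e m f : teq s s' -> nf_spec s t b e m f -> nf_spec s' t b e m f.
Proof. destruct 1; auto. Qed.

Lemma nf_spec_ES s t p1 p2 u b e m f fu :
  canN u -> csize u = fu -> nf_spec s t b e m f ->
  nf_spec s (ES t (PP p1 p2) u) b e m (f + fu + 1).
Proof.
  intros Hu Hfu; destruct s; simpl.
  - intros (Hc & ? & ? & ? & <-); repeat split; auto using canN; lia.
  - intros (Hc & ? & ? & ? & <-); repeat split; auto using canM; lia.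
  - intros (L & u1 & u2 & ->). exists ((PP p1 p2, u) :: L), u1, u2; reflexivity.
  - intros (L & p & t0 & ->). exists ((PP p1 p2, u) :: L), p, t0; reflexivity.
Qed.

Lemma typ_mtyp_normal :
  (forall G t s b e m f, typ G t s b e m f ->
     tight_ctx G -> normal t -> nf_spec s t b e m f) /\
  (forall G t A b e m f, mtyp G t A b e m f ->
     forall s, A = [s] -> tight_ctx G -> normal t -> nf_spec s t b e m f).
Proof.
  apply typ_mtyp_ind; simpl.
  - intros x s HG _. specialize (HG x). unfold ctx_single in HG. rewrite Nat.eqb_refl in HG.
    inversion HG as [|? ? [-> | ->]]; simpl; repeat split; auto using canN, canM.
  - intros G t s p A b e m f ep mp fp _ _ _ _ _. exists [], p, t; reflexivity.
  - intros G t s p b e m f _ IH Hs Hp HG Hn.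
    destruct (nf_spec_tight _ _ _ _ _ _ Hs (IH (tight_ctx_restr_drop _ _ Hp HG) (normal_Lam _ _ Hn)))
      as (Hc & -> & -> & -> & <-).
    repeat split; auto using canM; lia.
  - intros G D t u A s bt et mt ft bu eu mu fu _ IHt _ _ HG Hn.
    destruct (normal_App _ _ Hn) as [Hnt Habs].
    exfalso. apply Habs, (IHt (proj1 (tight_ctx_union_inv _ _ HG)) Hnt).
  - intros G t u b e m f _ IHt HG Hn.
    destruct (IHt HG (proj1 (normal_App _ _ Hn))) as (Hc & -> & -> & -> & <-).
    repeat split; auto using canN; lia.
  - intros G D t u A B _ _ _ _ _ _ _ _ _ _ _ _ _ _. exists [], t, u; reflexivity.
  - intros t u _ _. repeat split; auto using canM.
  - intros G D t p u s A A' bt et mt ft ep mp fp bu eu mu fu _ IHt Hp _ IHu HA HG Hn.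
    destruct (tight_ctx_union_inv _ _ HG) as [HGt HD].
    destruct (normal_ES _ _ _ Hn) as (Hnt & Hpv & Hnu & Hnpair).
    destruct p as [|p1 p2]; [contradiction|].
    inversion Hp as [| ? G1 G2 ? ? A1 B1 ep1 mp1 fp1 ep2 mp2 fp2 _ _ _ | ? ? ? _ Htight]; subst;
      apply meq_single_l in HA as (s' & -> & Hs'); inversion Hs'; subst.
    + exfalso. apply Hnpair, (IHu _ eq_refl HD Hnu).
    + destruct (IHu _ eq_refl HD Hnu) as (Hcu & -> & -> & -> & <-).
      rewrite !Nat.add_0_r.
      apply nf_spec_ES; auto.
      apply IHt; [eapply tight_ctx_restr_drop|]; eassumption.
  - intros G G' t s s' b e m f _ IH Hc Hs HG Hn.
    eapply nf_spec_teq; [exact Hs|].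
    apply IH; [exact (tight_ctx_ceq _ _ HG (ceq_sym _ _ Hc)) | exact Hn].
  - intros t s Hs. discriminate.
  - intros G D t s A b1 e1 m1 f1 b2 e2 m2 f2 _ IH HA _ s' Hs HG Hn.
    injection Hs as -> ->. apply mtyp_nil_inv in HA as (-> & -> & -> & -> & ->).
    rewrite ctx_union_empty_r in HG. rewrite !Nat.add_0_r. apply IH; assumption.
Qed.

Lemma step_count_lt k b e m b' e' m' :
  step_count k b e m b' e' m' -> b' + e' + m' < b + e + m.
Proof. destruct k; simpl; lia. Qed.

Lemma hseq_step t k t' b e m b' e' m' u :
  hstep t k t' -> step_count k b e m b' e' m' -> hseq t' b' e' m' u -> hseq t b e m u.
Proof.
  intros Hstep Hk Hseq; destruct k; destruct Hk as (-> & -> & ->); econstructor; eassumption.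
Qed.

Theorem theorem2 (G : ctx) (t : term) (s : ty) (b e m f : nat) :
  typ G t s b e m f -> tight_ctx G -> tight s ->
  exists u, canM u /\ hseq t b e m u /\ csize u = f.
Proof.
  remember (b + e + m) as n eqn:Hn.
  revert G t s b e m f Hn.
  induction n as [n IH] using lt_wf_ind; intros G t s b e m f Hn Ht HG Hs.
  destruct (classic (exists k t', hstep t k t')) as [(k & t' & Hstep) | Hnf].
  - destruct (typ_hstep _ _ _ _ _ _ _ _ _ Ht Hstep) as (b' & e' & m' & Hk & Ht').
    assert (Hlt : b' + e' + m' < n) by (subst n; exact (step_count_lt _ _ _ _ _ _ _ Hk)).
    destruct (IH _ Hlt G t' s b' e' m' f eq_refl Ht' HG Hs) as (u & Hu & Hseq & Hsize).
    exists u; repeat split; [exact Hu | eapply hseq_step; eassumption | exact Hsize].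
  - assert (Hn' : normal t) by (intros k t' H; apply Hnf; eauto).
    destruct (nf_spec_tight _ _ _ _ _ _ Hs (proj1 typ_mtyp_normal _ _ _ _ _ _ _ Ht HG Hn'))
      as (Hc & -> & -> & -> & <-).
    exists t; repeat split; [exact Hc | constructor].
Qed.
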